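(* Let $G$ be a (Hausdorff) topological group. Then: (1) $G$ is a cosmic space if and only if $G$ is separable and has countable $cn$-character; (2) $G$ is an $\aleph_0$-space if and only if $G$ is separable and has countable $ck$-character; (3) $G$ is a $\mathcal{P}_0$-space if and only if $G$ is separable and has countable $cp$-character.
   Context: All spaces are Hausdorff. A family $\mathcal{N}$ of subsets of a space $X$ is a network if whenever $x\in U$ with $U$ open, $x\in N\subseteq U$ for some $N\in\mathcal{N}$; it is a $k$-network if whenever $K\subseteq U$ with $K$ compact and $U$ open, $K\subseteq\bigcup\mathcal{F}\subseteq U$ for some finite $\mathcal{F}\subseteq\mathcal{N}$. A space is cosmic if it is regular with a countable network, and an $\aleph_0$-space if it is regular with a countable $k$-network. Let $x\in X$. A family $\mathcal{N}$ of subsets of $X$ is: - a $cn$-network at $x$ if for each neighborhood $O_x$ of $x$ the set $\bigcup\{N\in\mathcal{N}: x\in N\subseteq O_x\}$ is a neighborhood of $x$; - a $ck$-network at $x$ if for every neighborhood $O_x$ of $x$ there is a neighborhood $U_x$ of $x$ such that for each compact $K\subseteq U_x$ there is a finite $\mathcal{F}\subseteq\mathcal{N}$ with $x\in\bigcap\mathcal{F}$ and $K\subseteq\bigcup\mathcal{F}\subseteq O_x$; - a $cp$-network at $x$ if for every neighborhood $O_x$ of $x$ there is $N\in\mathcal{N}$ with $x\in N\subseteq O_x$, and for every $A\subseteq X$ with $x\in\overline{A}\setminus A$ and every neighborhood $O_x$ of $x$ there is $N\in\mathcal{N}$ with $x\in N\subseteq O_x$ and $N\cap A$ infinite. A family is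 a $cn$-, $ck$-, $cp$-network in $X$ if it is one at every point of $X$. For $\mathfrak{n}\in\{cn,ck,cp\}$, the $\mathfrak{n}$-character of $X$ at $x$ is the least cardinality of an $\mathfrak{n}$-network at $x$, and the $\mathfrak{n}$-character of $X$ is the supremum over $x\in X$. A $\mathcal{P}_0$-space is a regular space admitting a countable $cp$-network (a countable family which is a $cp$-network at every point). *)

From Stdlib Require Import List Classical.
Import ListNotations.

Set Implicit Arguments.

Definition set (T : Type) := T -> Prop.
Definition subset {T} (A B : set T) : Prop := forall x, A x -> B x.

(* A (possibly empty or finite) set is countable iff it injects into nat. *)
Definition countable {X : Type} (A : set X) : Prop :=
  exists f : X -> nat, forall x y, A x -> A y -> f x = f y -> x = y.
Definition finite_set {X : Type} (A : set X) : Prop :=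
  exists l : list X, forall x, A x -> In x l.
Definition infinite_set {X : Type} (A : set X) : Prop := ~ finite_set A.

Record topology (T : Type) := Topology {
  is_open : set T -> Prop;
  open_full : is_open (fun _ => True);
  open_inter : forall U V, is_open U -> is_open V -> is_open (fun x => U x /\ V x);
  open_union : forall F : set (set T), (forall U, F U -> is_open U) ->
                 is_open (fun x => exists U, F U /\ U x)
}.

Section Topo.
Context {T : Type} (tau : topology T).

Definition nbhd (x : T) (N : set T) : Prop :=
  exists U, is_open tau U /\ U x /\ subset U N.

Definition closure (A : set T) : set T :=
  fun x => forall U, is_open tau U -> U x -> exists y, U y /\ A y.

Definition hausdorff : Prop :=
  forall x y, x <> y -> exists U V, is_open tau U /\ is_open tau V /\ U x /\ V y /\
     (forall z, U z -> V z -> False).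

Definition regular : Prop :=
  forall x U, is_open tau U -> U x ->
    exists V, is_open tau V /\ V x /\ subset (closure V) U.

Definition compact (K : set T) : Prop :=
  forall F : set (set T), (forall U, F U -> is_open tau U) ->
    subset K (fun x => exists U, F U /\ U x) ->
    exists l : list (set T), (forall U, In U l -> F U) /\
      subset K (fun x => exists U, In U l /\ U x).

Definition dense (D : set T) : Prop := forall x, closure D x.
Definition separable : Prop := exists D, countable D /\ dense D.

Definition lunion (l : list (set T)) : set T := fun x => exists N, In N l /\ N x.

Definition network (Nf : set (set T)) : Prop :=
  forall x U, is_open tau U -> U x -> exists N, Nf N /\ N x /\ subset N U.

Definition k_network (Nf : set (set T)) : Prop :=
  forall K U, compact K -> is_open tau U -> subset K U ->
    exists l : list (set T), (forall N, In N l -> Nf N) /\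
      subset K (lunion l) /\ subset (lunion l) U.

Definition cosmic : Prop :=
  regular /\ exists Nf, countable Nf /\ network Nf.

Definition aleph0_space : Prop :=
  regular /\ exists Nf, countable Nf /\ k_network Nf.

Definition cn_network_at (Nf : set (set T)) (x : T) : Prop :=
  forall O, nbhd x O ->
    nbhd x (fun y => exists N, Nf N /\ N x /\ subset N O /\ N y).

Definition ck_network_at (Nf : set (set T)) (x : T) : Prop :=
  forall O, nbhd x O -> exists U, nbhd x U /\
    forall K, compact K -> subset K U ->
      exists l : list (set T), (forall N, In N l -> Nf N) /\
        (forall N, In N l -> N x) /\
        subset K (lunion l) /\ subset (lunion l) O.

Definition cp_network_at (Nf : set (set T)) (x : T) : Prop :=
  (forall O, nbhd x O -> exists N, Nf N /\ N x /\ subset N O) /\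
  (forall A : set T, closure A x -> ~ A x -> forall O, nbhd x O ->
     exists N, Nf N /\ N x /\ subset N O /\ infinite_set (fun y => N y /\ A y)).

(* The n-character of X is countable iff at every point there is a countable
   n-network at that point (sup of cardinals <= aleph_0 iff each is). *)
Definition countable_cn_character : Prop :=
  forall x, exists Nf, countable Nf /\ cn_network_at Nf x.
Definition countable_ck_character : Prop :=
  forall x, exists Nf, countable Nf /\ ck_network_at Nf x.
Definition countable_cp_character : Prop :=
  forall x, exists Nf, countable Nf /\ cp_network_at Nf x.

Definition P0_space : Prop :=
  regular /\ exists Nf, countable Nf /\ forall x, cp_network_at Nf x.

End Topo.

Record topological_group {T : Type} (tau : topology T) := TopGroup {
  gmul : T -> T -> T;
  ginv : T -> T;
  gone : T;
  gmulA : forall x y z, gmul x (gmul y z) = gmul (gmul x y) z;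
  gmul1l : forall x, gmul gone x = x;
  gmulVl : forall x, gmul (ginv x) x = gone;
  (* multiplication continuous as a map T x T -> T (product topology) *)
  gmul_cont : forall x y W, is_open tau W -> W (gmul x y) ->
    exists U V, is_open tau U /\ is_open tau V /\ U x /\ V y /\
      (forall u v, U u -> V v -> W (gmul u v));
  ginv_cont : forall W, is_open tau W -> is_open tau (fun x => W (ginv x))
}.

From Stdlib Require Import List Classical ClassicalEpsilon FunctionalExtensionality PropExtensionality Cantor.
Import ListNotations.

(* The forward implications hold in every space: a countable network yields a
   countable dense set by picking a point in each member, and the unions of two
   members of a countable network (k-network) form a countable cn-network
   (ck-network) at every point.  Conversely, let D be a countable dense subset
   of the group and Nf a countable local network at the identity e.  The
   translates dN (d in D, N in Nf) form a countable network (k-network).  A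
   point x is caught by dN as soon as d^-1 x lies in N, and if moreover N and
   d^-1 x lie in a small neighbourhood W of e, then every y = x (d^-1 x)^-1 (d^-1 y)
   of dN lies in x W^-1 W, inside any prescribed neighbourhood of x.  For
   cp-networks one translates the products N1 N2 instead: N1 catches d^-1 x,
   while x N2 carries the accumulation condition from e to x.  Topological
   groups are regular, which gives the remaining axiom. *)

Lemma countable_subset {X} (A B : set X) : countable A -> subset B A -> countable B.
Proof. intros [f f_inj] BA; exists f; intros; apply f_inj; auto. Qed.

Lemma countable_image {X Y} (A : set X) (g : X -> Y) :
  countable A -> countable (fun b => exists a, A a /\ b = g a).
Proof.
  intros [f f_inj].
  exists (fun b => match excluded_middle_informative (exists a, A a /\ b = g a) with
                   | left H => f (proj1_sig (constructive_indefinite_description _ H))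
                   | right _ => 0 end).
  intros b c Hb Hc.
  destruct (excluded_middle_informative (exists a, A a /\ b = g a)) as [Eb|]; [|contradiction].
  destruct (excluded_middle_informative (exists a, A a /\ c = g a)) as [Ec|]; [|contradiction].
  destruct (constructive_indefinite_description _ Eb) as [a [Aa ->]].
  destruct (constructive_indefinite_description _ Ec) as [a' [Aa' ->]]; simpl.
  intro E; rewrite (f_inj a a' Aa Aa' E); reflexivity.
Qed.

Lemma countable_prod {X Y} (A : set X) (B : set Y) :
  countable A -> countable B -> countable (fun p : X * Y => A (fst p) /\ B (snd p)).
Proof.
  intros [f f_inj] [g g_inj]. exists (fun p => to_nat (f (fst p), g (snd p))).
  intros [a b] [a' b'] [Aa Bb] [Aa' Bb'] E; cbn [fst snd] in *.
  apply to_nat_inj in E; injection E as Ef Eg.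
  rewrite (f_inj a a' Aa Aa' Ef), (g_inj b b' Bb Bb' Eg); reflexivity.
Qed.

Lemma countable_image2 {X Y Z} (A : set X) (B : set Y) (g : X -> Y -> Z) :
  countable A -> countable B -> countable (fun c => exists a b, A a /\ B b /\ c = g a b).
Proof.
  intros cA cB.
  apply (countable_subset _ _ (countable_image _ (fun p => g (fst p) (snd p))
                                 (countable_prod A B cA cB))).
  intros c (a & b & Aa & Bb & ->). exists (a, b); auto.
Qed.

Lemma infinite_set_inhabited {X} (A : set X) : infinite_set A -> exists x, A x.
Proof.
  intro infA. apply NNPP; intro empty. apply infA; exists [].
  intros x Ax; apply empty; exists x; exact Ax.
Qed.

Lemma infinite_set_map {X Y} (f : X -> Y) (g : Y -> X) (A : set X) (B : set Y) :
  (forall x, A x -> B (f x) /\ g (f x) = x) -> infinite_set A -> infinite_set B.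
Proof.
  intros fAB infA [l Bl]. apply infA; exists (map g l).
  intros x Ax. destruct (fAB x Ax) as [Bfx gfx].
  rewrite <- gfx; apply in_map, Bl, Bfx.
Qed.

Lemma list_select {A B : Type} (P : A -> Prop) (R : A -> B -> Prop) (l : list A) :
  (forall a, In a l -> P a -> exists b, R a b) ->
  exists l', (forall b, In b l' -> exists a, In a l /\ R a b) /\
    (forall a, In a l -> P a -> exists b, In b l' /\ R a b).
Proof.
  induction l as [|a l IH]; intro H.
  - exists []; split; [intros b []|intros a' []].
  - destruct IH as (l' & Hl' & Hl); [intros a' ha'; apply H; right; exact ha'|].
    destruct (classic (P a)) as [Pa|nPa].
    + destruct (H a (or_introl eq_refl) Pa) as (b & Rab).
      exists (b :: l'); split.
      * intros b' [<-|hb']; [exists a; simpl; auto|].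
        destruct (Hl' b' hb') as (a' & ha' & R'); exists a'; simpl; auto.
      * intros a' [<-|ha'] Pa'; [exists b; simpl; auto|].
        destruct (Hl a' ha' Pa') as (b' & hb' & R'); exists b'; simpl; auto.
    + exists l'; split.
      * intros b' hb'; destruct (Hl' b' hb') as (a' & ha' & R'); exists a'; simpl; auto.
      * intros a' [<-|ha'] Pa'; [contradiction|]. apply Hl; auto.
Qed.

Section Topology.
Context {T : Type} (tau : topology T).

Definition finitely_covered (Nf : set (set T)) (C U : set T) : Prop :=
  exists l, (forall N, In N l -> Nf N) /\ subset C (lunion l) /\ subset (lunion l) U.

Definition pair_unions (Nf : set (set T)) : set (set T) :=
  fun S => exists N1 N2, Nf N1 /\ Nf N2 /\ S = (fun y => N1 y \/ N2 y).

Lemma open_of_open_nbhds (S : set T) :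
  (forall x, S x -> exists U, is_open tau U /\ U x /\ subset U S) -> is_open tau S.
Proof.
  intro H.
  assert (E : S = (fun x => exists U, (fun U => is_open tau U /\ subset U S) U /\ U x)).
  { apply functional_extensionality; intro x; apply propositional_extensionality; split.
    - intro Sx; destruct (H x Sx) as (U & oU & Ux & US); exists U; auto.
    - intros (U & (_ & US) & Ux); auto. }
  rewrite E; apply open_union; intros U []; auto.
Qed.

Lemma nbhd_open (U : set T) x : is_open tau U -> U x -> nbhd tau x U.
Proof. intros oU Ux; exists U; repeat split; auto. intros y h; exact h. Qed.

Lemma subset_closure (P : set T) : subset P (closure tau P).
Proof. intros x Px U _ Ux; eauto. Qed.

Lemma not_closure_nbhd (P : set T) x : ~ closure tau P x ->
  exists U, is_open tau U /\ U x /\ forall y, U y -> ~ P y.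
Proof.
  intro nPx. apply not_all_ex_not in nPx as [U hU].
  apply imply_to_and in hU as [oU hU]. apply imply_to_and in hU as [Ux hU].
  exists U; repeat split; auto. intros y Uy Py; apply hU; eauto.
Qed.

Lemma open_not_closure (P : set T) : is_open tau (fun y => ~ closure tau P y).
Proof.
  apply open_of_open_nbhds; intros y ny.
  destruct (not_closure_nbhd P y ny) as (U & oU & Uy & UP).
  exists U; repeat split; auto.
  intros z Uz cz. destruct (cz U oU Uz) as (w & Uw & Pw). exact (UP w Uw Pw).
Qed.

Lemma compact_inter_closure (K P : set T) : compact tau K ->
  compact tau (fun y => K y /\ closure tau P y).
Proof.
  intros cK F oF cov.
  set (Z := fun y => ~ closure tau P y).
  destruct (cK (fun U => F U \/ U = Z)) as (l & Fl & Kl).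
  - intros U [FU | ->]; [auto|apply open_not_closure].
  - intros y Ky. destruct (classic (closure tau P y)) as [c|nc].
    + destruct (cov y (conj Ky c)) as (U & FU & Uy); exists U; auto.
    + exists Z; auto.
  - destruct (list_select F (fun U V => F U /\ V = U) l) as (l' & Fl' & ll').
    { intros U _ FU; eauto. }
    exists l'; split.
    + intros V hV. destruct (Fl' V hV) as (U & _ & FU & ->); exact FU.
    + intros y [Ky cy]. destruct (Kl y Ky) as (U & hU & Uy).
      destruct (Fl U hU) as [FU| ->]; [|contradiction].
      destruct (ll' U hU FU) as (V & hV & _ & ->); eauto.
Qed.

Lemma compact_preimage (f g : T -> T) (K : set T) :
  (forall W, is_open tau W -> is_open tau (fun y => W (g y))) ->
  (forall y, f (g y) = y) -> (forall y, g (f y) = y) ->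
  compact tau K -> compact tau (fun y => K (f y)).
Proof.
  intros cg fg gf cK F oF cov.
  destruct (cK (fun V => exists W, F W /\ V = (fun y => W (g y)))) as (l & Fl & Kl).
  - intros V (W & FW & ->). apply cg, oF, FW.
  - intros x Kx. destruct (cov (g x)) as (W & FW & Wx); [rewrite fg; exact Kx|].
    exists (fun y => W (g y)); eauto.
  - destruct (list_select (fun _ => True) (fun V W => F W /\ V = (fun y => W (g y))) l)
      as (l' & Fl' & ll').
    { intros V hV _. destruct (Fl V hV) as (W & h); eauto. }
    exists l'; split.
    + intros W hW. destruct (Fl' W hW) as (V & _ & FW & _); exact FW.
    + intros y Ky. destruct (Kl (f y) Ky) as (V & hV & Vy).
      destruct (ll' V hV I) as (W & hW & _ & ->).
      exists W; split; [exact hW|]. cbv beta in Vy; rewrite gf in Vy; exact Vy.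
Qed.

Lemma compact_singleton x : compact tau (fun y => y = x).
Proof.
  intros F oF cov. destruct (cov x eq_refl) as (U & FU & Ux).
  exists [U]; split; [intros V [<-|[]]; exact FU|].
  intros y ->. exists U; simpl; auto.
Qed.

Lemma compact_add_point x K : compact tau K -> compact tau (fun y => K y \/ y = x).
Proof.
  intros cK F oF cov.
  destruct (cK F oF) as (l & Fl & Kl); [intros y Ky; apply cov; auto|].
  destruct (cov x (or_intror eq_refl)) as (U & FU & Ux).
  exists (U :: l); split; [intros V [<-|h]; auto|].
  intros y [Ky| ->].
  - destruct (Kl y Ky) as (V & hV & Vy). exists V; simpl; auto.
  - exists U; simpl; auto.
Qed.

Lemma finitely_covered_union (Nf : set (set T)) (U : set T) {I : Type}
    (C : I -> set T) (li : list I) :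
  (forall i, In i li -> finitely_covered Nf (C i) U) ->
  finitely_covered Nf (fun y => exists i, In i li /\ C i y) U.
Proof.
  induction li as [|i li IH]; intro H.
  - exists []; split; [intros _ []|split; intros y (j & [] & _)].
  - destruct (H i (or_introl eq_refl)) as (l1 & Nfl1 & Cl1 & l1U).
    destruct IH as (l2 & Nfl2 & Cl2 & l2U); [intros j hj; apply H; right; exact hj|].
    exists (l1 ++ l2). split; [|split].
    + intros N hN; apply in_app_iff in hN as [h|h]; auto.
    + intros y (j & [<-|hj] & Cy).
      * destruct (Cl1 y Cy) as (N & hN & Ny). exists N; rewrite in_app_iff; auto.
      * destruct (Cl2 y (ex_intro _ j (conj hj Cy))) as (N & hN & Ny).
        exists N; rewrite in_app_iff; auto.
    + intros y (N & hN & Ny). apply in_app_iff in hN as [h|h];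
        [apply l1U|apply l2U]; exists N; auto.
Qed.

Lemma pair_unions_countable Nf : countable Nf -> countable (pair_unions Nf).
Proof. intro cNf; exact (countable_image2 _ _ (fun N1 N2 y => N1 y \/ N2 y) cNf cNf). Qed.

Lemma network_separable Nf : inhabited T -> countable Nf -> network tau Nf -> separable tau.
Proof.
  intros inhT cNf nNf.
  exists (fun b => exists N, Nf N /\ b = epsilon inhT N). split.
  - apply countable_image, cNf.
  - intros x U oU Ux. destruct (nNf x U oU Ux) as (N & NfN & Nx & NU).
    exists (epsilon inhT N). split; [apply NU, (epsilon_spec inhT N); eauto|eauto].
Qed.

Lemma network_cn_network_at Nf x : network tau Nf -> cn_network_at tau (pair_unions Nf) x.
Proof.
  intros nNf O (U & oU & Ux & UO).
  exists U; repeat split; auto. intros y Uy.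
  destruct (nNf x U oU Ux) as (N1 & NfN1 & N1x & N1U).
  destruct (nNf y U oU Uy) as (N2 & NfN2 & N2y & N2U).
  exists (fun z => N1 z \/ N2 z). repeat split; auto.
  - exists N1, N2; auto.
  - intros z [h|h]; apply UO; auto.
Qed.

Lemma k_network_network Nf : k_network tau Nf -> network tau Nf.
Proof.
  intros kNf x U oU Ux.
  destruct (kNf (fun y => y = x) U (compact_singleton x) oU) as (l & lNf & xl & lU);
    [intros y ->; exact Ux|].
  destruct (xl x eq_refl) as (N & hN & Nx). exists N; repeat split; auto.
  intros y Ny; apply lU; exists N; auto.
Qed.

Lemma k_network_ck_network_at Nf x : k_network tau Nf -> ck_network_at tau (pair_unions Nf) x.
Proof.
  intros kNf O (U & oU & Ux & UO). exists U; split; [apply nbhd_open; auto|].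
  intros K cK KU.
  destruct (kNf (fun y => K y \/ y = x) U (compact_add_point x K cK) oU) as (l & lNf & Kl & lU);
    [intros y [Ky| ->]; auto|].
  destruct (Kl x (or_intror eq_refl)) as (N0 & hN0 & N0x).
  exists (map (fun N y => N y \/ N0 y) l). split; [|split; [|split]].
  - intros S hS. apply in_map_iff in hS as (N & <- & hN). exists N, N0; auto.
  - intros S hS. apply in_map_iff in hS as (N & <- & hN). right; exact N0x.
  - intros y Ky. destruct (Kl y (or_introl Ky)) as (N & hN & Ny).
    exists (fun y => N y \/ N0 y); split; [apply in_map_iff; eauto|left; exact Ny].
  - intros y (S & hS & Sy). apply in_map_iff in hS as (N & <- & hN).
    apply UO, lU. destruct Sy as [h|h]; [exists N|exists N0]; auto.
Qed.

Lemma cp_network_network Nf : (forall x, cp_network_at tau Nf x) -> network tau Nf.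
Proof. intros cpNf x U oU Ux. apply (proj1 (cpNf x)), nbhd_open; auto. Qed.

Lemma cosmic_separable_cn_character : inhabited T ->
  cosmic tau -> separable tau /\ countable_cn_character tau.
Proof.
  intros inhT [_ (Nf & cNf & nNf)]. split; [exact (network_separable Nf inhT cNf nNf)|].
  intro x. exists (pair_unions Nf).
  split; [apply pair_unions_countable, cNf|apply network_cn_network_at, nNf].
Qed.

Lemma aleph0_separable_ck_character : inhabited T ->
  aleph0_space tau -> separable tau /\ countable_ck_character tau.
Proof.
  intros inhT [_ (Nf & cNf & kNf)].
  split; [exact (network_separable Nf inhT cNf (k_network_network Nf kNf))|].
  intro x. exists (pair_unions Nf).
  split; [apply pair_unions_countable, cNf|apply k_network_ck_network_at, kNf].
Qed.

Lemma P0_separable_cp_character : inhabited T ->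
  P0_space tau -> separable tau /\ countable_cp_character tau.
Proof.
  intros inhT [_ (Nf & cNf & cpNf)].
  split; [exact (network_separable Nf inhT cNf (cp_network_network Nf cpNf))|].
  intro x; exists Nf; auto.
Qed.

End Topology.

Section TopologicalGroup.
Context {T : Type} (tau : topology T) (G : topological_group tau).
Local Notation "x * y" := (gmul G x y).
Local Notation "x ^-1" := (ginv G x) (at level 2, left associativity, format "x ^-1").
Local Notation e := (gone G).

Definition translate (d : T) (N : set T) : set T := fun y => N (d^-1 * y).

Definition setmul (N1 N2 : set T) : set T := fun z => exists a b, N1 a /\ N2 b /\ z = a * b.

Definition translates (D : set T) (Nf : set (set T)) : set (set T) :=
  fun S => exists d N, D d /\ Nf N /\ S = translate d N.

Definition setmuls (Nf : set (set T)) : set (set T) :=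
  fun S => exists N1 N2, Nf N1 /\ Nf N2 /\ S = setmul N1 N2.

Lemma mulKg a y : a^-1 * (a * y) = y.
Proof. rewrite gmulA, gmulVl, gmul1l; reflexivity. Qed.

Lemma mulgV x : x * x^-1 = e.
Proof.
  rewrite <- (mulKg (x^-1) (x * x^-1)), (gmulA G (x^-1) x), gmulVl, gmul1l. apply gmulVl.
Qed.

Lemma mulKVg a y : a * (a^-1 * y) = y.
Proof. rewrite gmulA, mulgV, gmul1l; reflexivity. Qed.

Lemma mulg1 x : x * e = x.
Proof. rewrite <- (gmulVl G x), mulKVg; reflexivity. Qed.

Lemma invgK x : x^-1^-1 = x.
Proof. rewrite <- (mulg1 (x^-1^-1)), <- (gmulVl G x), mulKg; reflexivity. Qed.

Lemma invg1 : e^-1 = e.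
Proof. rewrite <- (mulg1 (e^-1)). apply gmulVl. Qed.

Lemma invMg a b : (a * b)^-1 = b^-1 * a^-1.
Proof.
  rewrite <- (mulKg (a * b) (b^-1 * a^-1)), <- (gmulA G a), mulKVg, mulgV, mulg1.
  reflexivity.
Qed.

Lemma open_ltrans a W : is_open tau W -> is_open tau (fun y => W (a * y)).
Proof.
  intro oW. apply open_of_open_nbhds. intros y Way.
  destruct (gmul_cont G a y W oW Way) as (U & V & oU & oV & Ua & Vy & UVW).
  exists V; repeat split; auto. intros z Vz; apply UVW; auto.
Qed.

Lemma open_rtrans a W : is_open tau W -> is_open tau (fun y => W (y * a)).
Proof.
  intro oW. apply open_of_open_nbhds. intros y Wya.
  destruct (gmul_cont G y a W oW Wya) as (U & V & oU & oV & Uy & Va & UVW).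
  exists U; repeat split; auto. intros z Uz; apply UVW; auto.
Qed.

Lemma open_inv W : is_open tau W -> is_open tau (fun y => W (y^-1)).
Proof. apply ginv_cont. Qed.

Lemma nbhd1_mul_sub W : is_open tau W -> W e ->
  exists V, is_open tau V /\ V e /\ forall a b, V a -> V b -> W (a * b).
Proof.
  intros oW We.
  destruct (gmul_cont G e e W oW) as (A & B & oA & oB & Ae & Be & ABW);
    [rewrite gmul1l; exact We|].
  exists (fun w => A w /\ B w). repeat split; auto; [apply open_inter; auto|].
  intros a b [Aa _] [_ Bb]. exact (ABW a b Aa Bb).
Qed.

Lemma nbhd1_div_sub W : is_open tau W -> W e ->
  exists V, is_open tau V /\ V e /\ forall a b, V a -> V b -> W (a^-1 * b).
Proof.
  intros oW We. destruct (nbhd1_mul_sub W oW We) as (V & oV & Ve & VW).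
  exists (fun w => V w /\ V (w^-1)). repeat split; auto.
  - apply open_inter; [|apply open_inv]; exact oV.
  - rewrite invg1; exact Ve.
  - intros a b [_ Va] [Vb _]. exact (VW _ _ Va Vb).
Qed.

Lemma nbhd_translate_sub x U : is_open tau U -> U x -> exists W, is_open tau W /\ W e /\
  forall d N, W (d^-1 * x) -> subset N W -> subset (translate d N) U.
Proof.
  intros oU Ux.
  destruct (nbhd1_div_sub (fun z => U (x * z)) (open_ltrans x U oU)) as (W & oW & We & WU);
    [cbv beta; rewrite mulg1; exact Ux|].
  exists W; repeat split; auto. intros d N Wdx NW y Ny.
  specialize (WU _ _ Wdx (NW _ Ny)). cbv beta in WU.
  rewrite invMg, invgK, <- gmulA, !mulKVg in WU. exact WU.
Qed.

Lemma nbhd_translate_setmul_sub x U : is_open tau U -> U x -> exists W, is_open tau W /\ W e /\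
  forall d N1 N2, W (d^-1 * x) -> subset N1 W -> subset N2 W ->
    subset (translate d (setmul N1 N2)) U.
Proof.
  intros oU Ux. destruct (nbhd_translate_sub x U oU Ux) as (W1 & oW1 & W1e & W1U).
  destruct (nbhd1_mul_sub W1 oW1 W1e) as (W2 & oW2 & W2e & W2W1).
  exists (fun w => W1 w /\ W2 w). repeat split; auto; [apply open_inter; auto|].
  intros d N1 N2 [W1dx _] N1W N2W. apply (W1U d (setmul N1 N2) W1dx).
  intros z (a & b & N1a & N2b & ->).
  exact (W2W1 a b (proj2 (N1W a N1a)) (proj2 (N2W b N2b))).
Qed.

Lemma group_regular : regular tau.
Proof.
  intros x U oU Ux. destruct (nbhd_translate_sub x U oU Ux) as (W & oW & We & WU).
  exists (fun y => W (y^-1 * x)). split; [|split].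
  - apply (open_inv (fun z => W (z * x))), open_rtrans, oW.
  - cbv beta; rewrite gmulVl; exact We.
  - intros y cly.
    destruct (cly (fun z => W (z^-1 * y))) as (z & Wzy & Wzx).
    + apply (open_inv (fun z => W (z * y))), open_rtrans, oW.
    + cbv beta; rewrite gmulVl; exact We.
    + exact (WU z W Wzx (fun _ h => h) y Wzy).
Qed.

Lemma compact_ltrans_preimage d C : compact tau C -> compact tau (fun y => C (d * y)).
Proof.
  apply (compact_preimage tau (fun y => d * y) (fun y => d^-1 * y)).
  - intros W oW; apply open_ltrans, oW.
  - intro; apply mulKVg.
  - intro; apply mulKg.
Qed.

Lemma dense_translate D x M : dense tau D -> is_open tau M -> M e ->
  exists d, D d /\ M (d^-1 * x).
Proof.
  intros dD oM Me.
  destruct (dD x (fun z => M (z^-1 * x))) as (d & Mdx & Dd); eauto.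
  - apply (open_inv (fun z => M (z * x))), open_rtrans, oM.
  - cbv beta; rewrite gmulVl; exact Me.
Qed.

Lemma translates_countable D Nf : countable D -> countable Nf -> countable (translates D Nf).
Proof. intros cD cNf; exact (countable_image2 _ _ translate cD cNf). Qed.

Lemma setmuls_countable Nf : countable Nf -> countable (setmuls Nf).
Proof. intro cNf; exact (countable_image2 _ _ setmul cNf cNf). Qed.

Lemma cn_network_at1_translates D Nf : dense tau D -> cn_network_at tau Nf e ->
  network tau (translates D Nf).
Proof.
  intros dD cnNf x U oU Ux.
  destruct (nbhd_translate_sub x U oU Ux) as (W & oW & We & WU).
  destruct (cnNf W (nbhd_open tau W e oW We)) as (M & oM & Me & MNf).
  destruct (dense_translate D x M dD oM Me) as (d & Dd & Mdx).
  destruct (MNf _ Mdx) as (N & NfN & _ & NW & Ndx).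
  exists (translate d N). repeat split; [exists d, N; auto|exact Ndx|].
  exact (WU d N (NW _ Ndx) NW).
Qed.

Lemma ck_network_at1_translates_local D Nf : dense tau D -> ck_network_at tau Nf e ->
  forall x U, is_open tau U -> U x -> exists Q, is_open tau Q /\ Q x /\
    forall C, compact tau C -> subset C Q -> finitely_covered (translates D Nf) C U.
Proof.
  intros dD ckNf x U oU Ux.
  destruct (nbhd_translate_sub x U oU Ux) as (O & oO & Oe & OU).
  destruct (ckNf O (nbhd_open tau O e oO Oe)) as (V & (V0 & oV0 & V0e & V0V) & hV).
  destruct (nbhd1_div_sub V0 oV0 V0e) as (W & oW & We & WV0).
  set (R := fun z => W z /\ O (z^-1)).
  assert (oR : is_open tau R) by (apply open_inter; [|apply open_inv]; auto).
  assert (Re : R (x^-1 * x)) by (rewrite gmulVl; split; [|rewrite invg1]; auto).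
  exists (translate x R). split; [apply open_ltrans, oR|split; [exact Re|]].
  intros C cC CQ.
  destruct (dD x _ (open_ltrans (x^-1) R oR) Re) as (d & [Wxd Oxd] & Dd).
  rewrite invMg, invgK in Oxd.
  destruct (hV _ (compact_ltrans_preimage d C cC)) as (l & lNf & _ & Cl & lO).
  { intros y Cy. apply V0V. destruct (CQ _ Cy) as [Wxy _].
    specialize (WV0 _ _ Wxd Wxy). rewrite invMg, invgK, <- gmulA, mulKVg, mulKg in WV0.
    exact WV0. }
  exists (map (translate d) l). split; [|split].
  - intros S hS. apply in_map_iff in hS as (N & <- & hN). exists d, N; auto.
  - intros c Cc. destruct (Cl (d^-1 * c)) as (N & hN & Nc); [cbv beta; rewrite mulKVg; exact Cc|].
    exists (translate d N); split; [apply in_map_iff; eauto|exact Nc].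
  - intros y (S & hS & Sy). apply in_map_iff in hS as (N & <- & hN).
    refine (OU d N Oxd _ y Sy). intros z Nz; apply lO; exists N; auto.
Qed.

Lemma ck_network_at1_translates D Nf : dense tau D -> ck_network_at tau Nf e ->
  k_network tau (translates D Nf).
Proof.
  intros dD ckNf K U cK oU KU.
  set (F := fun P => is_open tau P /\ forall C, compact tau C -> subset C (closure tau P) ->
        finitely_covered (translates D Nf) C U).
  destruct (cK F) as (lP & FlP & KlP).
  - intros P [oP _]; exact oP.
  - intros x Kx.
    destruct (ck_network_at1_translates_local D Nf dD ckNf x U oU (KU x Kx)) as (Q & oQ & Qx & QU).
    destruct (group_regular x Q oQ Qx) as (P & oP & Px & PQ).
    exists P; split; [split; [exact oP|]|exact Px].
    intros C cC CP. apply QU; [exact cC|]. intros y Cy; apply PQ, CP, Cy.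
  - destruct (finitely_covered_union (translates D Nf) U (fun P y => K y /\ closure tau P y) lP)
      as (l & lT & Kl & lU).
    + intros P hP. apply (proj2 (FlP P hP)); [apply compact_inter_closure, cK|].
      intros y [_ h]; exact h.
    + exists l; repeat split; auto. intros y Ky. destruct (KlP y Ky) as (P & hP & Py).
      apply Kl. exists P; repeat split; auto. apply subset_closure, Py.
Qed.

Lemma cp_network_at1_meets_translates D Nf x W : dense tau D -> cp_network_at tau Nf e ->
  is_open tau W -> W e -> exists d N, D d /\ Nf N /\ subset N W /\ N (d^-1 * x).
Proof.
  intros dD [cpNf cpNf_acc] oW We.
  set (B := fun z => (exists d, D d /\ z = d^-1 * x) /\ z <> e).
  destruct (classic (closure tau B e)) as [clB|nclB].
  - destruct (cpNf_acc B clB (fun h => proj2 h eq_refl) W (nbhd_open tau W e oW We))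
      as (N & NfN & _ & NW & infN).
    destruct (infinite_set_inhabited _ infN) as (z & Nz & (d & Dd & ->) & _).
    exists d, N; auto.
  - destruct (not_closure_nbhd tau B e nclB) as (U & oU & Ue & UB).
    destruct (dense_translate D x U dD oU Ue) as (d & Dd & Udx).
    destruct (cpNf W (nbhd_open tau W e oW We)) as (N & NfN & Ne & NW).
    exists d, N; repeat split; auto.
    destruct (classic (d^-1 * x = e)) as [-> | ne]; [exact Ne|].
    exfalso; apply (UB _ Udx); split; eauto.
Qed.

Lemma cp_network_at1_translate_setmul D Nf x U : dense tau D -> cp_network_at tau Nf e ->
  is_open tau U -> U x -> exists W, is_open tau W /\ W e /\
  forall N2, Nf N2 -> N2 e -> subset N2 W -> exists S, translates D (setmuls Nf) S /\
    S x /\ subset S U /\ forall z, N2 z -> S (x * z).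
Proof.
  intros dD cpNf oU Ux.
  destruct (nbhd_translate_setmul_sub x U oU Ux) as (W & oW & We & WU).
  exists W; repeat split; auto. intros N2 NfN2 N2e N2W.
  destruct (cp_network_at1_meets_translates D Nf x W dD cpNf oW We)
    as (d & N1 & Dd & NfN1 & N1W & N1dx).
  exists (translate d (setmul N1 N2)). split; [|split; [|split]].
  - exists d, (setmul N1 N2). repeat split; auto. exists N1, N2; auto.
  - exists (d^-1 * x), e. rewrite mulg1; auto.
  - exact (WU d N1 N2 (N1W _ N1dx) N1W N2W).
  - intros z N2z. exists (d^-1 * x), z. rewrite gmulA; auto.
Qed.

Lemma cp_network_at1_translates D Nf : dense tau D -> cp_network_at tau Nf e ->
  forall x, cp_network_at tau (translates D (setmuls Nf)) x.
Proof.
  intros dD cpNf x. split.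
  - intros O (U & oU & Ux & UO).
    destruct (cp_network_at1_translate_setmul D Nf x U dD cpNf oU Ux) as (W & oW & We & WS).
    destruct (proj1 cpNf W (nbhd_open tau W e oW We)) as (N2 & NfN2 & N2e & N2W).
    destruct (WS N2 NfN2 N2e N2W) as (S & TS & Sx & SU & _).
    exists S; repeat split; auto. intros y Sy; apply UO, SU, Sy.
  - intros A clA nAx O (U & oU & Ux & UO).
    destruct (cp_network_at1_translate_setmul D Nf x U dD cpNf oU Ux) as (W & oW & We & WS).
    set (B := fun z => A (x * z)).
    assert (clB : closure tau B e).
    { intros V oV Ve. destruct (clA (fun y => V (x^-1 * y))) as (y & Vy & Ay).
      - apply open_ltrans, oV.
      - cbv beta; rewrite gmulVl; exact Ve.
      - exists (x^-1 * y); split; [exact Vy|]. unfold B; rewrite mulKVg; exact Ay. }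
    assert (nBe : ~ B e) by (unfold B; rewrite mulg1; exact nAx).
    destruct (proj2 cpNf B clB nBe W (nbhd_open tau W e oW We)) as (N2 & NfN2 & N2e & N2W & infN2).
    destruct (WS N2 NfN2 N2e N2W) as (S & TS & Sx & SU & xN2S).
    exists S; repeat split; auto; [intros y Sy; apply UO, SU, Sy|].
    apply (infinite_set_map (fun z => x * z) (fun y => x^-1 * y) _ _
             (fun z hz => conj (conj (xN2S z (proj1 hz)) (proj2 hz)) (mulKg x z)) infN2).
Qed.

Lemma separable_cn_character_cosmic :
  separable tau -> countable_cn_character tau -> cosmic tau.
Proof.
  intros (D & cD & dD) cn. split; [exact group_regular|].
  destruct (cn e) as (Nf & cNf & cnNf). exists (translates D Nf).
  split; [apply translates_countable; auto|apply cn_network_at1_translates; auto].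
Qed.

Lemma separable_ck_character_aleph0 :
  separable tau -> countable_ck_character tau -> aleph0_space tau.
Proof.
  intros (D & cD & dD) ck. split; [exact group_regular|].
  destruct (ck e) as (Nf & cNf & ckNf). exists (translates D Nf).
  split; [apply translates_countable; auto|apply ck_network_at1_translates; auto].
Qed.

Lemma separable_cp_character_P0 :
  separable tau -> countable_cp_character tau -> P0_space tau.
Proof.
  intros (D & cD & dD) cp. split; [exact group_regular|].
  destruct (cp e) as (Nf & cNf & cpNf). exists (translates D (setmuls Nf)).
  split; [apply translates_countable, setmuls_countable; auto|].
  apply cp_network_at1_translates; auto.
Qed.

End TopologicalGroup.

Theorem mainTheorem1 (T : Type) (tau : topology T) (G : topological_group tau)
  (HT2 : hausdorff tau) :
  (cosmic tau <-> separable tau /\ countable_cn_character tau) /\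
  (aleph0_space tau <-> separable tau /\ countable_ck_character tau) /\
  (P0_space tau <-> separable tau /\ countable_cp_character tau).
Proof.
  pose proof (inhabits (gone G)) as inhT.
  split; [|split]; split.
  - apply cosmic_separable_cn_character, inhT.
  - intros [sep cn]; exact (separable_cn_character_cosmic tau G sep cn).
  - apply aleph0_separable_ck_character, inhT.
  - intros [sep ck]; exact (separable_ck_character_aleph0 tau G sep ck).
  - apply P0_separable_cp_character, inhT.
  - intros [sep cp]; exact (separable_cp_character_P0 tau G sep cp).
Qed.
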